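(* Let $X$ be a $T_0$ space. The following are equivalent: (1) $X$ is $QI_2$-continuous. (2) For every $x\in X$ there exists an irreducible subset $\mathcal F$ of $P_S(X)$ with $\mathcal F\subseteq w(x)$ and $\uparrow x=\bigcap\mathcal F$.
   Context: For a $T_0$ space $X$, the specialization order is $x\le y$ iff $x\in \mathrm{cl}\{y\}$; $\uparrow A=\{x: a\le x\text{ for some } a\in A\}$, $\uparrow x=\uparrow\{x\}$; $A^\uparrow$, $A^\downarrow$ are the sets of upper and lower bounds of $A$, and $A^\delta=(A^\uparrow)^\downarrow$. A nonempty subset $A$ of a space is irreducible if whenever $A\subseteq F_1\cup F_2$ with $F_1,F_2$ closed, $A\subseteq F_1$ or $A\subseteq F_2$. $X^{(<\omega)}$ is the set of nonempty finite subsets of $X$. $P_S(X)$ is the set of nonempty compact saturated (upper) subsets of $X$ with the upper Vietoris topology, basis $\{\square U: U\text{ open}\}$, $\square U=\{Q: Q\subseteq U\}$. For $A\subseteq X$, $x\in X$, $A\ll_{I_2}x$ means: for every irreducible $D\subseteq X$ with $x\in D^\delta$, $A\cap\mathrm{cl}D\ne\emptyset$. For $x\in X$, $w(x)=\{\uparrow F: F\in X^{(<\omega)}, F\ll_{I_2}x\}$. $X$ is $QI_2$-continuous if for every $x\in X$, $w(x)$ is an irreducible subset of $P_S(X)$ and $\uparrow x=\bigcap w(x)$. *)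

From mathcomp Require Import all_boot all_order.
From mathcomp Require Import all_classical all_reals all_analysis.
Set Implicit Arguments. Unset Strict Implicit. Unset Printing Implicit Defensive.
Local Open Scope classical_set_scope.

Section QI2.
Variable T : topologicalType.

Definition spec_le (x y : T) : Prop := closure [set y] x.

Definition up_set (A : set T) : set T := [set x | exists2 a, A a & spec_le a x].
Definition up_pt (x : T) : set T := up_set [set x].

Definition upper_bounds (A : set T) : set T := [set y | forall a, A a -> spec_le a y].
Definition lower_bounds (A : set T) : set T := [set y | forall a, A a -> spec_le y a].
Definition delta_cut (A : set T) : set T := lower_bounds (upper_bounds A).

Definition irreducible_wrt {U : Type} (closedP : set U -> Prop) (A : set U) : Prop :=
  A !=set0 /\
  forall F1 F2, closedP F1 -> closedP F2 -> A `<=` F1 `|` F2 -> A `<=` F1 \/ A `<=` F2.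

Definition irreducible (A : set T) : Prop := irreducible_wrt closed A.

(* saturated = upper set w.r.t. the specialization order *)
Definition saturated (A : set T) : Prop := up_set A `<=` A.

Definition PS : set (set T) := [set Q | Q !=set0 /\ compact Q /\ saturated Q].

(* upper Vietoris topology on P_S(X): open sets are unions of basic sets
   box U = {Q in P_S(X) | Q `<=` U}, U open in X *)
Definition box (U : set T) : set (set T) := [set Q | PS Q /\ Q `<=` U].

Definition PS_open (O : set (set T)) : Prop :=
  exists I : set (set T), (forall U, I U -> open U) /\
    O = [set Q | exists2 U, I U & box U Q].

Definition PS_closed (C : set (set T)) : Prop :=
  C `<=` PS /\ PS_open (PS `\` C).

Definition PS_irreducible (A : set (set T)) : Prop :=
  A `<=` PS /\ irreducible_wrt PS_closed A.

Definition way_below_I2 (A : set T) (x : T) : Prop :=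
  forall D : set T, irreducible D -> delta_cut D x -> A `&` closure D !=set0.

Definition w (x : T) : set (set T) :=
  [set Q | exists F : set T, [/\ finite_set F, F !=set0, way_below_I2 F x & Q = up_set F]].

Definition QI2_continuous : Prop :=
  forall x : T, PS_irreducible (w x) /\ up_pt x = \bigcap_(Q in w x) Q.

End QI2.

From mathcomp Require Import all_boot all_order.
From mathcomp Require Import all_classical all_reals all_analysis.
Set Implicit Arguments. Unset Strict Implicit. Unset Printing Implicit Defensive.
Local Open Scope classical_set_scope.

(** (1) gives (2) with [FF := w x].  Conversely, every member of [w x]
    contains [up_pt x], so [up_pt x = \bigcap (w x)] follows from
    [FF `<=` w x], and [w x] is irreducible as soon as it lies in the closure
    of [FF] in [P_S(X)].  If some [up_set F] in [w x] had a basic neighbourhood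
    [box U] missing [FF], every member of [FF] would meet the closed set
    [~` U]; the topological Rudin lemma then yields an irreducible closed
    [B `<=` ~` U] meeting every member of [FF], and [\bigcap FF = up_pt x]
    puts [x] in the cut of [B].  Now [F <<_{I_2} x] forces [F] to meet [B],
    contradicting [up_set F `<=` U]. *)

Lemma irreducible_wrt_set1 {U : Type} (closedP : set U -> Prop) (u : U) :
  irreducible_wrt closedP [set u].
Proof.
split; first by exists u.
by move=> F1 F2 _ _ /(_ u erefl) [F1u|F2u]; [left|right] => _ ->.
Qed.

Lemma irreducible_wrt_dense {U : Type} (closedP : set U -> Prop) (A B : set U) :
  irreducible_wrt closedP A -> A `<=` B ->
  (forall C, closedP C -> A `<=` C -> B `<=` C) ->
  irreducible_wrt closedP B.
Proof.
move=> [[a Aa] irrA] AB Bcl; split; first by exists a; exact: AB.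
move=> F1 F2 cF1 cF2 BF.
by have [AF|AF] := irrA F1 F2 cF1 cF2 (subset_trans AB BF); [left|right];
  exact: Bcl.
Qed.

Section SpecializationOrder.
Variable X : topologicalType.

Lemma spec_le_refl (a : X) : spec_le a a.
Proof. exact: subset_closure. Qed.

Lemma spec_le_trans (a b c : X) : spec_le a b -> spec_le b c -> spec_le a c.
Proof.
move=> ab bc B; rewrite nbhsE => -[U [oU Ua] UB].
have [_ [-> Ub]] := ab U (open_nbhs_nbhs (conj oU Ua)).
have [_ [-> Uc]] := bc U (open_nbhs_nbhs (conj oU Ub)).
by exists c; split => //; exact: UB.
Qed.

Lemma saturated_up_set (A : set X) : saturated (up_set A).
Proof. by move=> y [z [a Aa az] zy]; exists a => //; exact: spec_le_trans zy. Qed.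

Lemma up_set_bigcup (A : set X) : up_set A = \bigcup_(a in A) up_pt a.
Proof.
apply/seteqP; split=> [y [a Aa ay]|y [a Aa [_ -> ay]]]; last by exists a.
by exists a => //; exists a.
Qed.

Lemma compact_up_pt (a : X) : compact (up_pt a).
Proof.
move=> G PG Ga; exists a; split; first by exists a => //; exact: spec_le_refl.
move=> A B GA Ba; have [y [Ay [_ -> ay]]] := filter_ex (filterI GA Ga).
by have [_ [-> By]] := ay B Ba; exists y.
Qed.

Lemma compact_up_set (A : set X) : finite_set A -> compact (up_set A).
Proof.
move=> /finite_seqP[s ->]; rewrite up_set_bigcup bigcup_seq.
by apply: bigsetU_compact => a _; exact: compact_up_pt.
Qed.

End SpecializationOrder.

Section TopologicalRudin.
Variable X : topologicalType.

Lemma compact_meets_bigcap_chain (K : set X) (F : set (set X)) :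
  compact K -> F !=set0 -> total_on F subset ->
  (forall B, F B -> closed B /\ K `&` B !=set0) ->
  K `&` \bigcap_(B in F) B !=set0.
Proof.
move=> cK [B0 FB0] totF FB.
pose G := filter_from F (fun B => K `&` B).
have PG : ProperFilter G.
  apply: filter_from_proper; last by move=> B /FB[].
  apply: filter_from_filter; first by exists B0.
  move=> B1 B2 FB1 FB2.
  have [B12|B21] := totF B1 B2 FB1 FB2.
  - by exists B1 => // y [Ky B1y]; split; split => //; exact: B12.
  - by exists B2 => // y [Ky B2y]; split; split => //; exact: B21.
have [p [Kp clp]] := cK G PG (ex_intro2 _ _ B0 FB0 (@subIsetl _ K B0)).
exists p; split => // B FBB; apply: (FB B FBB).1 => N Np.
have [y [[_ By] Ny]] := clp (K `&` B) N (ex_intro2 _ _ B FBB (fun _ h => h)) Np.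
by exists y.
Qed.

(* Zorn is applied to the complements [V] of the candidates relative to [C],
   so that unions of chains correspond to intersections and the empty chain
   to [C] itself. *)
Lemma minimal_closed_subset (C : set X) (P : set X -> Prop) :
  closed C -> P C ->
  (forall F : set (set X), F !=set0 -> total_on F subset ->
     (forall B, F B -> closed B /\ P B) -> P (\bigcap_(B in F) B)) ->
  exists2 B, [/\ closed B, B `<=` C & P B] &
    forall B', closed B' -> B' `<=` B -> P B' -> B' = B.
Proof.
move=> cC PC Pchain.
pose Q V := closed (C `&` ~` V) /\ P (C `&` ~` V).
have [V0 [[cB0 PB0] maxV0]] : exists V, Q V /\ forall V', V `<` V' -> ~ Q V'.
  apply: Zorn_bigcup => F QF totF.
  pose G := C |` [set C `&` ~` V | V in F].
  have GQ B : G B -> closed B /\ P B by case=> [->|[V /QF QV <-]].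
  rewrite /Q; have -> : C `&` ~` (\bigcup_(V in F) V) = \bigcap_(B in G) B.
    apply/seteqP; split=> [y [Cy nFy] _ [->|[V FV <-]]|y Gy] //.
      by split => // Vy; apply: nFy; exists V.
    split; first exact: Gy (or_introl erefl).
    by move=> [V FV Vy]; have [_] := Gy _ (or_intror (ex_intro2 _ _ V FV erefl)).
  split; first by apply: closed_bigI => B /GQ[].
  apply: Pchain => // [|B1 B2 GB1 GB2]; first by exists C; left.
  case: GB1 GB2 => [->|[V1 FV1 <-]] [->|[V2 FV2 <-]];
    do ?by [left|right] => y [].
  have [V12|V21] := totF V1 V2 FV1 FV2.
  - by right => y [Cy nV2y]; split => // /V12.
  - by left => y [Cy nV1y]; split => // /V21.
exists (C `&` ~` V0); first by split => // y [].
move=> B cB BB0 PB.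
have BC : B `<=` C by move=> y /BB0[].
have QB : Q (~` B) by rewrite /Q setCK setIidr.
have V0B : V0 `<=` ~` B by move=> y V0y By; exact: (BB0 y By).2.
suff -> : V0 = ~` B by rewrite setCK setIidr.
apply: contrapT => neq; apply: (maxV0 (~` B)) => //; split => // BV0.
by apply: neq; apply/seteqP; split.
Qed.

Lemma PS_closed_meets (E : set X) : closed E ->
  PS_closed [set K | PS K /\ K `&` E !=set0].
Proof.
move=> cE; split; first by move=> K [].
exists [set ~` E]; split; first by move=> _ ->; exact: closed_openC.
apply/seteqP; split=> K.
  move=> [PSK nKE]; exists (~` E) => //; split => // y Ky Ey.
  by apply: nKE; split => //; exists y.
by move=> [_ -> [PSK KE]]; split => // -[_ [y [Ky Ey]]]; exact: KE Ey.
Qed.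

(* A minimal closed subset of [C] meeting every member of [A] exists by
   compactness of the members, and is irreducible by irreducibility of [A]. *)
Lemma topological_rudin (A : set (set X)) (C : set X) :
  PS_irreducible A -> closed C -> (forall K, A K -> K `&` C !=set0) ->
  exists B, [/\ closed B, B `<=` C, irreducible B &
                forall K, A K -> K `&` B !=set0].
Proof.
move=> [APS [[K0 AK0] irrA]] cC AC.
pose meets B := forall K, A K -> K `&` B !=set0.
have /(minimal_closed_subset cC AC)[B [cB BC meetsB] minB] :
    forall F, F !=set0 -> total_on F subset ->
      (forall B, F B -> closed B /\ meets B) -> meets (\bigcap_(B in F) B).
  move=> F F0 totF FB K AK; have [_ [cK _]] := APS K AK.
  by apply: compact_meets_bigcap_chain => // B /FB[cB /(_ K AK)].
exists B; split => //; split; first by have [y [_ By]] := meetsB K0 AK0; exists y.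
move=> F1 F2 cF1 cF2 BF.
have AF : A `<=` [set K | PS K /\ K `&` (B `&` F1) !=set0] `|`
                 [set K | PS K /\ K `&` (B `&` F2) !=set0].
  move=> K AK; have [y [Ky By]] := meetsB K AK.
  by case: (BF y By) => Fy; [left|right]; split; try exact: APS; exists y.
have shrink F : closed F ->
    A `<=` [set K | PS K /\ K `&` (B `&` F) !=set0] -> B `<=` F.
  move=> cF AF'; rewrite -(minB (B `&` F) (closedI cB cF) (@subIsetl _ B F)).
    exact: subIsetr.
  by move=> K /AF'[].
have [AF1|AF2] := irrA _ _ (PS_closed_meets (closedI cB cF1))
                           (PS_closed_meets (closedI cB cF2)) AF.
- by left; exact: shrink AF1.
- by right; exact: shrink AF2.
Qed.

End TopologicalRudin.

Section WayBelowFamily.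
Variable X : topologicalType.

Lemma up_pt_sub_w (x : X) (Q : set X) : w x Q -> up_pt x `<=` Q.
Proof.
move=> [F [_ _ wbF ->]] y [_ -> xy].
have dx : delta_cut [set x] x by move=> z; exact.
have [a [Fa ax]] := wbF [set x] (irreducible_wrt_set1 _ x) dx.
by exists a => //; exact: spec_le_trans xy.
Qed.

Lemma w_sub_PS (x : X) : w x `<=` @PS X.
Proof.
move=> _ [F [fF [a Fa] _ ->]]; split.
  by exists a; exists a => //; exact: spec_le_refl.
by split; [exact: compact_up_set|exact: saturated_up_set].
Qed.

Lemma delta_cut_meets (FF : set (set X)) (B : set X) (x : X) :
  (forall K, FF K -> saturated K) -> up_pt x = \bigcap_(K in FF) K ->
  (forall K, FF K -> K `&` B !=set0) -> delta_cut B x.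
Proof.
move=> satFF e meetsB y ubB.
suff [_ -> //] : up_pt x y.
rewrite e => K FFK; have [d [Kd Bd]] := meetsB K FFK.
by apply: (satFF K FFK); exists d => //; exact: ubB.
Qed.

Lemma w_sub_PS_closed (FF : set (set X)) (x : X) (C : set (set X)) :
  PS_irreducible FF -> FF `<=` w x -> up_pt x = \bigcap_(Q in FF) Q ->
  PS_closed C -> FF `<=` C -> w x `<=` C.
Proof.
move=> [FFPS irrFF] FFw e [_ [I [Iopen eC]]] FFC Q wQ.
apply: contrapT => nCQ.
have [U IU [_ QU]] : [set Q | exists2 U, I U & box U Q] Q.
  by rewrite -eC; split => //; exact: w_sub_PS wQ.
have FFmeets K : FF K -> K `&` ~` U !=set0.
  move=> FFK; apply: contrapT => nKU.
  have : (@PS X `\` C) K.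
    rewrite eC; exists U => //; split; first exact: FFPS.
    by move=> y Ky; apply: contrapT => nUy; apply: nKU; exists y.
  by move=> [_]; apply; exact: FFC.
have [B [cB BU irrB meetsB]] :=
  topological_rudin (conj FFPS irrFF) (open_closedC (Iopen U IU)) FFmeets.
have [F [_ _ wbF eQ]] := wQ.
have dB := delta_cut_meets (fun K FFK => (FFPS K FFK).2.2) e meetsB.
have [a [Fa Ba]] := wbF B irrB dB.
apply: (BU a (cB a Ba)); apply: QU; rewrite eQ.
by exists a => //; exact: spec_le_refl.
Qed.

End WayBelowFamily.

Theorem proposition4p5 (X : topologicalType) :
  kolmogorov_space X ->
  (QI2_continuous X <->
   forall x : X, exists FF : set (set X),
     [/\ PS_irreducible FF, FF `<=` w x & up_pt x = \bigcap_(Q in FF) Q]).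
Proof.
move=> _; split=> [cont x|H x].
  by have [irr e] := cont x; exists (w x); split.
have [FF [irrFF FFw e]] := H x.
split.
  split; first exact: w_sub_PS.
  apply: (irreducible_wrt_dense irrFF.2 FFw) => C.
  exact: w_sub_PS_closed irrFF FFw e.
apply/seteqP; split=> [y xy Q wQ|y wy]; first exact: up_pt_sub_w wQ y xy.
by rewrite e => Q FFQ; exact: wy Q (FFw Q FFQ).
Qed.
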